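(* Assume the standing conventions of the context. (i) If $m'=m+1$, $Z'$ is regular and $D_Z=\{Z'\}$, then $Z$ is regular. (ii) If $m'=m$, $Z$ is regular and $D_{Z'}=\{Z\}$, then $Z'$ is regular.
   Context: A symbol is an array $\Lambda=\binom{a'_1,\ldots,a'_{m_1}}{b'_1,\ldots,b'_{m_2}}$ of two strictly decreasing finite sequences of nonnegative integers (top row, bottom row); its defect is $\mathrm{def}(\Lambda)=m_1-m_2$. Standing assumptions: $Z=\binom{a_1,\ldots,a_{m+1}}{b_1,\ldots,b_m}$ is a special symbol of defect $1$, i.e. $a_1\ge b_1\ge a_2\ge b_2\ge\cdots\ge b_m\ge a_{m+1}$; $Z'=\binom{c_1,\ldots,c_{m'}}{d_1,\ldots,d_{m'}}$ is a special symbol of defect $0$, i.e. $c_1\ge d_1\ge c_2\ge d_2\ge\cdots\ge c_{m'}\ge d_{m'}$; and $m'\in\{m,m+1\}$. For a symbol $Y$, $Y_{\mathrm I}$ is the set of entries of $Y$ occurring in exactly one row; $Y$ is regular if no entry occurs in both rows. For $M\subset Z_{\mathrm I}$, $\Lambda_M$ is the symbol obtained from $Z$ by moving every entry of $M$ to the other row (rows re-sorted decreasingly); for $N\subset Z'_{\mathrm I}$, $\Lambda_N$ is obtained from $Z'$ in the same way. $\overline{\mathcal S}_Z=\{\Lambda_M: M\subset Z_{\mathrm I}\}$, $\overline{\mathcal S}_{Z'}=\{\Lambda_N:N\subset Z'_{\mathrm I}\}$; $\mathcal S_{Z,1}$ (resp. $\mathcal S_{Z',0}$) is the set of elements of $\overline{\mathcal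 S}_Z$ of defect $1$ (resp. of $\overline{\mathcal S}_{Z'}$ of defect $0$). Relation $\overline{\mathcal B}^+_{Z,Z'}\subset\overline{\mathcal S}_Z\times\overline{\mathcal S}_{Z'}$: for $\Lambda=\binom{a'_1,\ldots,a'_{m_1}}{b'_1,\ldots,b'_{m_2}}\in\overline{\mathcal S}_Z$ and $\Lambda'=\binom{c'_1,\ldots,c'_{m'_1}}{d'_1,\ldots,d'_{m'_2}}\in\overline{\mathcal S}_{Z'}$, $(\Lambda,\Lambda')\in\overline{\mathcal B}^+_{Z,Z'}$ iff $\mathrm{def}(\Lambda')=1-\mathrm{def}(\Lambda)$ and: if $m'=m$, $a'_i>d'_i\ge a'_{i+1}$ for $1\le i\le m'_2$ and $b'_{i-1}>c'_i\ge b'_i$ for $1\le i\le m'_1$; if $m'=m+1$, $a'_i\ge d'_i>a'_{i+1}$ for $1\le i\le m'_2$ and $b'_{i-1}\ge c'_i>b'_i$ for $1\le i\le m'_1$; here $b'_0=+\infty$ and nonexistent entries $a'_j,b'_j$ beyond the row lengths are $-\infty$. Then $\mathcal D_{Z,Z'}=\overline{\mathcal B}^+_{Z,Z'}\cap(\mathcal S_{Z,1}\times\mathcal S_{Z',0})$, $D_Z=\{\Lambda'\mid (Z,\Lambda')\in\mathcal D_{Z,Z'}\}$ and $D_{Z'}=\{\Lambda\mid(\Lambda,Z')\in\mathcal D_{Z,Z'}\}$. *)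

From mathcomp Require Import all_boot all_order all_algebra.
Set Implicit Arguments. Unset Strict Implicit. Unset Printing Implicit Defensive.
Import GRing.Theory Num.Theory.

(* A symbol: (top row, bottom row), rows listed in decreasing order. *)
Definition symbol := (seq nat * seq nat)%type.

Definition strdec (s : seq nat) : bool := sorted (fun x y => y < x)%N s.
Definition is_symbol (L : symbol) : bool := strdec L.1 && strdec L.2.

Definition defect (L : symbol) : int := (size L.1)%:Z - (size L.2)%:Z.

(* special symbol of defect 1: a_1 >= b_1 >= a_2 >= ... >= b_m >= a_{m+1} *)
Definition special1 (m : nat) (Z : symbol) : Prop :=
  [/\ is_symbol Z, size Z.1 = m.+1, size Z.2 = m &
      forall i, (i < m)%N ->
        (nth 0 Z.2 i <= nth 0 Z.1 i)%N /\ (nth 0 Z.1 i.+1 <= nth 0 Z.2 i)%N].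

(* special symbol of defect 0: c_1 >= d_1 >= c_2 >= ... >= c_m' >= d_m' *)
Definition special0 (m' : nat) (Z : symbol) : Prop :=
  [/\ is_symbol Z, size Z.1 = m', size Z.2 = m' &
      (forall i, (i < m')%N -> (nth 0 Z.2 i <= nth 0 Z.1 i)%N) /\
      (forall i, (i.+1 < m')%N -> (nth 0 Z.1 i.+1 <= nth 0 Z.2 i)%N)].

Definition inI (L : symbol) (x : nat) : bool := (x \in L.1) != (x \in L.2).

Definition regular (L : symbol) : Prop := forall x, ~ (x \in L.1 /\ x \in L.2).

Definition move (L : symbol) (M : seq nat) : symbol :=
  (sort (fun x y => y <= x)%N
     ([seq x <- L.1 | x \notin M] ++ [seq x <- L.2 | x \in M]),
   sort (fun x y => y <= x)%N
     ([seq x <- L.2 | x \notin M] ++ [seq x <- L.1 | x \in M])).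

Definition in_Sbar (L Lam : symbol) : Prop :=
  exists M : seq nat, (forall x, x \in M -> inI L x) /\ Lam = move L M.

Definition S1 (Z Lam : symbol) : Prop := in_Sbar Z Lam /\ defect Lam = 1%R.
Definition S0 (Z' Lam : symbol) : Prop := in_Sbar Z' Lam /\ defect Lam = 0%R.

(* extended naturals, for the conventions b'_0 = +oo, missing entries = -oo *)
Inductive xnat := NInf | Fin of nat | PInf.

Definition xle (x y : xnat) : bool :=
  match x, y with
  | NInf, _ => true
  | _, PInf => true
  | Fin a, Fin b => (a <= b)%N
  | _, _ => false
  end.
Definition xlt (x y : xnat) : bool := ~~ xle y x.

(* 1-indexed entry of a row; nonexistent entries are -oo *)
Definition ent (s : seq nat) (i : nat) : xnat :=
  if (0 < i <= size s)%N then Fin (nth 0 s i.-1) else NInf.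
(* same, with the 0-th entry being +oo (used for b'_0) *)
Definition entb (s : seq nat) (i : nat) : xnat :=
  if i == 0%N then PInf else ent s i.

(* the relation \bar B^+_{Z,Z'}; eqm = (m' == m) *)
Definition Bplus (eqm : bool) (L L' : symbol) : Prop :=
  (defect L' = 1 - defect L)%R /\
  if eqm then
    (forall i, (1 <= i <= size L'.2)%N ->
       xlt (ent L'.2 i) (ent L.1 i) && xle (ent L.1 i.+1) (ent L'.2 i)) /\
    (forall i, (1 <= i <= size L'.1)%N ->
       xlt (ent L'.1 i) (entb L.2 i.-1) && xle (ent L.2 i) (ent L'.1 i))
  else
    (forall i, (1 <= i <= size L'.2)%N ->
       xle (ent L'.2 i) (ent L.1 i) && xlt (ent L.1 i.+1) (ent L'.2 i)) /\
    (forall i, (1 <= i <= size L'.1)%N ->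
       xle (ent L'.1 i) (entb L.2 i.-1) && xlt (ent L.2 i) (ent L'.1 i)).

Definition Drel (m m' : nat) (Z Z' L L' : symbol) : Prop :=
  [/\ S1 Z L, S0 Z' L' & Bplus (m' == m) L L'].

Definition D_Z (m m' : nat) (Z Z' L' : symbol) : Prop := Drel m m' Z Z' Z L'.
Definition D_Z' (m m' : nat) (Z Z' L : symbol) : Prop := Drel m m' Z Z' L Z'.

From mathcomp Require Import all_boot all_order all_algebra.
From mathcomp Require Import zify.
Set Implicit Arguments. Unset Strict Implicit. Unset Printing Implicit Defensive.

(* A symbol Y is read through its interleaving
     a'_1, b'_1, a'_2, b'_2, ...   (padded by -oo),
   a sequence of extended naturals.  Y is special iff its interleaving is
   nonincreasing; a special Y is regular iff the interleaving is strictly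
   decreasing, and otherwise two adjacent terms coincide.  In both cases m' = m+1
   and m' = m, the inequalities defining \bar B^+ say that one interleaving w lies
   interlaced above another one z: z(k+1) < w(k) <= z(k-1).
   Exchange lemma: if w is strictly decreasing and z repeats a term, then two
   adjacent terms of w can be swapped without breaking the interlacing.  For a
   regular symbol, swapping two adjacent terms of its interleaving means moving
   those two entries to the opposite rows, which yields another element of
   \bar S of the same defect.  So in (i), if Z were not regular, Z' (playing w
   against z = Z) would produce a second element of D_Z; in (ii) Z (playing w
   against z = Z') would produce a second element of D_{Z'}. *)

Lemma xle_refl x : xle x x.
Proof. by case: x => //= n. Qed.

Lemma xle_trans x y z : xle x y -> xle y z -> xle x z.
Proof. by case: x; case: y; case: z => //= a b c; apply: leq_trans. Qed.

Lemma xle_total x y : xle x y || xle y x.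
Proof. by case: x; case: y => //= a b; apply: leq_total. Qed.

Lemma xltW x y : xlt x y -> xle x y.
Proof. by rewrite /xlt; case/orP: (xle_total x y) => ->. Qed.

Lemma xlt_le_trans x y z : xlt x y -> xle y z -> xlt x z.
Proof. by rewrite /xlt => /negP xy yz; apply/negP => zx; apply/xy/(xle_trans yz). Qed.

Lemma xle_lt_trans x y z : xle x y -> xlt y z -> xlt x z.
Proof. by rewrite /xlt => xy /negP yz; apply/negP => zx; apply/yz/(xle_trans zx). Qed.

Lemma xlt_trans x y z : xlt x y -> xlt y z -> xlt x z.
Proof. by move=> xy /xltW; apply: xlt_le_trans. Qed.

Lemma xlt_irr x : xlt x x = false.
Proof. by rewrite /xlt xle_refl. Qed.

Lemma xltF a b : xlt (Fin a) (Fin b) = (a < b).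
Proof. by rewrite /xlt /= ltnNge. Qed.

(* Sequences of extended naturals, and the interlacing condition z(k+1) < w(k) <= z(k-1)
   (with z(-1) = +oo) which encodes the relation \bar B^+. *)

Definition prev (z : nat -> xnat) (k : nat) : xnat :=
  if k is k'.+1 then z k' else PInf.

Definition interlaced (z w : nat -> xnat) (N : nat) : Prop :=
  (forall k, k < N -> xlt (z k.+1) (w k)) /\
  (forall k, k < N -> xle (w k) (prev z k)).

Definition decreasing (w : nat -> xnat) (N : nat) : Prop :=
  forall k, k.+1 < N -> xlt (w k.+1) (w k).

Definition swap_adj (w : nat -> xnat) (p q : nat) : xnat :=
  if q == p then w p.+1 else if q == p.+1 then w p else w q.

Lemma decreasing_lt w N : decreasing w N ->
  forall i j, i < j -> j < N -> xlt (w j) (w i).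
Proof.
move=> wD i j; elim: j => // j IH; rewrite ltnS leq_eqVlt => /orP[/eqP <-|ij] jN.
  exact: wD.
by apply: xlt_trans (wD j jN) (IH ij _); lia.
Qed.

Lemma decreasing_inj w N : decreasing w N ->
  forall a b, a < N -> b < N -> w a = w b -> a = b.
Proof.
move=> wD a b aN bN wab; case: (ltngtP a b) => // ab.
- by have := decreasing_lt wD ab bN; rewrite wab xlt_irr.
- by have := decreasing_lt wD ab aN; rewrite wab xlt_irr.
Qed.

Lemma interlaced_step2 z w N : interlaced z w N ->
  forall q, q.+2 < N -> xlt (w q.+2) (w q).
Proof. by move=> [zw wz] q qN; apply: xle_lt_trans (wz q.+2 qN) (zw q _); lia. Qed.

Lemma sign_change (s : nat -> bool) a b : a <= b -> s a -> ~~ s b ->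
  exists p, [/\ a <= p, p < b, s p & ~~ s p.+1].
Proof.
elim: b => [|b IH] ab sa sb.
  by move: ab; rewrite leqn0 => /eqP ea; rewrite ea (negbTE sb) in sa.
case: (ltngtP a b.+1) ab => // [ab | ea] _; last by rewrite ea (negbTE sb) in sa.
case sb': (s b); first by exists b; split => //; lia.
by have [p [? ? ? ?]] := IH ab sa (negbT sb'); exists p; split => //; lia.
Qed.

(* Swap at a p beyond the repetition with w(p) <= z(p) but
   z(p+1) < w(p+1); it exists since w(N-1) > z(N-1) = -oo. *)
Lemma exchange_adjacent z w N j :
  interlaced z w N -> decreasing w N -> z N.-1 = NInf ->
  j.+1 < N.-1 -> z j = z j.+1 ->
  exists p, p.+1 < N /\ interlaced z (swap_adj w p) N.
Proof.
move=> [zw wz] wD zN jN zj.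
have s_start : xle (w j.+1) (z j.+1) by rewrite -zj; apply: (wz j.+1); lia.
have s_end : ~~ xle (w N.-1) (z N.-1).
  rewrite zN; have := zw N.-1; rewrite (_ : N.-1.+1 = N); last lia.
  by case: (w N.-1) => // /(_ ltac:(lia)).
have [p [jp pN wz_p zw_p1]] :=
  sign_change (s := fun q => xle (w q) (z q)) (ltnW jN) s_start s_end.
have pN' : p.+1 < N by lia.
exists p; split => //; split => k kN; rewrite /swap_adj.
- case: eqP => [->|_] //; case: eqP => [->|_]; last exact: zw.
  exact: xlt_trans (zw p.+1 pN') (wD p pN').
- case: eqP => [->|_].
    by apply/xltW/(xlt_le_trans (wD p pN')); apply: wz; lia.
  by case: eqP => [->|_] //; apply: wz.
Qed.

(* The interleaved sequence a'_1, b'_1, a'_2, b'_2, ... of a symbol, padded by -oo. *)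
Definition interleave (Y : symbol) (k : nat) : xnat :=
  if odd k then ent Y.2 (k./2).+1 else ent Y.1 (k./2).+1.

Lemma interleave_even Y i : interleave Y (i + i) = ent Y.1 i.+1.
Proof. by rewrite /interleave addnn odd_double doubleK. Qed.

Lemma interleave_odd Y i : interleave Y (i + i).+1 = ent Y.2 i.+1.
Proof. by rewrite /interleave addnn /= odd_double /= uphalf_double. Qed.

Lemma ent_in s i : i < size s -> ent s i.+1 = Fin (nth 0 s i).
Proof. by rewrite /ent /= => ->. Qed.

Lemma ent_out s i : size s <= i -> ent s i.+1 = NInf.
Proof. by rewrite /ent /= ltnNge => ->. Qed.

Lemma even_or_odd k : exists i, k = i + i \/ k = (i + i).+1.
Proof.
elim: k => [|k [i [->|->]]]; first by exists 0; left.
- by exists i; right.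
- by exists i.+1; left; rewrite addSn addnS.
Qed.

Lemma double_succ i : (i + i).+2 = i.+1 + i.+1.
Proof. lia. Qed.

Lemma defect_size (L : symbol) a b :
  size L.1 = a -> size L.2 = b -> defect L = (a%:Z - b%:Z)%R.
Proof. by rewrite /defect => -> ->. Qed.

Lemma Bplus_succ_interlaced L L' n :
  size L.1 = n.+1 -> size L.2 = n -> size L'.1 = n.+1 -> size L'.2 = n.+1 ->
  Bplus false L L' <-> interlaced (interleave L) (interleave L') (n.+1 + n.+1).
Proof.
move=> h1 h2 h1' h2'; rewrite /Bplus (defect_size h1 h2) (defect_size h1' h2').
split.
- move=> [_ [A B]]; split => k; have [i [->|->]] := even_or_odd k => hk.
  + rewrite interleave_odd interleave_even.
    by have /andP[_ ->] := B i.+1 ltac:(lia).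
  + rewrite double_succ interleave_even interleave_odd.
    by have /andP[_ ->] := A i.+1 ltac:(lia).
  + rewrite interleave_even; case: i hk => [|i] hk /=; first by case: (ent _ _).
    rewrite -addSnnS interleave_odd; by have /andP[-> _] := B i.+2 ltac:(lia).
  + rewrite /= interleave_odd interleave_even.
    by have /andP[-> _] := A i.+1 ltac:(lia).
- move=> [HL HU]; split; first lia.
  split => -[|i] hi //.
  + have := HU (i + i).+1 ltac:(lia); have := HL (i + i).+1 ltac:(lia).
    by rewrite /= double_succ !interleave_odd !interleave_even => -> ->.
  + have := HU (i + i) ltac:(lia); have := HL (i + i) ltac:(lia).
    rewrite interleave_odd interleave_even => -> /=; case: i {hi} => [|i].
      by case: (ent _ _).
    by rewrite -double_succ /= interleave_odd andbT.
Qed.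

Lemma Bplus_eq_interlaced L L' n :
  size L.1 = n.+1 -> size L.2 = n -> size L'.1 = n -> size L'.2 = n ->
  Bplus true L L' <-> interlaced (interleave L') (interleave L) (n.+1 + n).
Proof.
move=> h1 h2 h1' h2'; rewrite /Bplus (defect_size h1 h2) (defect_size h1' h2').
split.
- move=> [_ [A B]]; split => k; have [i [->|->]] := even_or_odd k => hk.
  + rewrite interleave_odd interleave_even; case: (ltnP i n) => hin.
      by have /andP[-> _] := A i.+1 ltac:(lia).
    by rewrite ent_out ?h2' // ent_in ?h1 //; lia.
  + rewrite double_succ interleave_even interleave_odd; case: (ltnP i.+1 n) => hin.
      by have /andP[-> _] := B i.+2 ltac:(lia).
    by rewrite ent_out ?h1' // ent_in ?h2 //; lia.
  + rewrite interleave_even; case: i hk => [|i] hk /=; first by case: (ent _ _).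
    rewrite -addSnnS interleave_odd; by have /andP[_ ->] := A i.+1 ltac:(lia).
  + rewrite /= interleave_odd interleave_even.
    by have /andP[_ ->] := B i.+1 ltac:(lia).
- move=> [HL HU]; split; first lia.
  split => -[|i] hi //.
  + have := HU (i + i).+2 ltac:(lia); have := HL (i + i) ltac:(lia).
    by rewrite /= double_succ !interleave_odd !interleave_even => -> ->.
  + have := HU (i + i).+1 ltac:(lia).
    rewrite /= interleave_odd interleave_even => ->; rewrite andbT.
    case: i hi => [|i] hi /=; first by rewrite ent_in //; lia.
    have := HL (i + i).+1 ltac:(lia).
    by rewrite double_succ interleave_even interleave_odd.
Qed.

Definition balanced (Y : symbol) : bool := size Y.2 <= size Y.1 <= (size Y.2).+1.

Definition alternating (Y : symbol) : Prop :=
  (forall i, i < size Y.2 -> nth 0 Y.2 i <= nth 0 Y.1 i) /\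
  (forall i, i.+1 < size Y.1 -> nth 0 Y.1 i.+1 <= nth 0 Y.2 i).

Definition special (Y : symbol) : Prop :=
  [/\ is_symbol Y, balanced Y & alternating Y].

Lemma special1_special m Z : special1 m Z -> special Z.
Proof.
move=> [isZ s1 s2 alt]; split; rewrite /balanced ?s1 ?s2 ?leqnSn ?leqnn //.
by split => i; rewrite ?s1 ?s2 => hi; have [] := alt i hi.
Qed.

Lemma special0_special m Z : special0 m Z -> special Z.
Proof.
move=> [isZ s1 s2 [alt1 alt2]]; split; rewrite /balanced ?s1 ?s2 ?leqnSn ?leqnn //.
by split => i; rewrite ?s1 ?s2; [apply: alt1 | apply: alt2].
Qed.

Lemma interleave_fin Y k : balanced Y -> k < size Y.1 + size Y.2 ->
  exists x, interleave Y k = Fin x /\ (if odd k then x \in Y.2 else x \in Y.1).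
Proof.
move=> /andP[hs1 hs2]; have [i [->|->]] := even_or_odd k => hk.
- have hi : i < size Y.1 by lia.
  exists (nth 0 Y.1 i).
  by rewrite interleave_even addnn odd_double ent_in // mem_nth.
- have hi : i < size Y.2 by lia.
  exists (nth 0 Y.2 i).
  by rewrite interleave_odd /= addnn odd_double ent_in // mem_nth.
Qed.

Lemma interleave_out Y k : balanced Y -> size Y.1 + size Y.2 <= k ->
  interleave Y k = NInf.
Proof.
move=> /andP[hs1 hs2]; have [i [->|->]] := even_or_odd k => hk.
- by rewrite interleave_even ent_out //; lia.
- by rewrite interleave_odd ent_out //; lia.
Qed.

Lemma interleave_decreasing Y : balanced Y -> alternating Y -> regular Y ->
  decreasing (interleave Y) (size Y.1 + size Y.2).
Proof.
move=> /andP[hs1 hs2] [alt1 alt2] reg k; have [i [->|->]] := even_or_odd k => hk.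
- have [hi1 hi2] : i < size Y.1 /\ i < size Y.2 by lia.
  rewrite interleave_odd interleave_even !ent_in // xltF ltn_neqAle alt1 // andbT.
  apply/eqP => E; apply: (reg (nth 0 Y.2 i)).
  by rewrite {1}E !mem_nth.
- have [hi1 hi2] : i.+1 < size Y.1 /\ i < size Y.2 by lia.
  rewrite double_succ interleave_odd interleave_even !ent_in // xltF.
  rewrite ltn_neqAle alt2 // andbT.
  apply/eqP => E; apply: (reg (nth 0 Y.2 i)).
  by rewrite -{1}E !mem_nth.
Qed.

Lemma strdec_nth_lt (s : seq nat) i j :
  strdec s -> i < j -> j < size s -> nth 0 s j < nth 0 s i.
Proof.
move=> hs ij js; apply: (sorted_ltn_nth (leT := fun x y => y < x)) => //;
  rewrite ?inE; try lia.
by move=> a b c h1 h2; apply: ltn_trans h2 h1.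
Qed.

Lemma nonregular_repeat Y x : special Y -> x \in Y.1 -> x \in Y.2 ->
  exists j, j.+1 < size Y.1 + size Y.2 /\ interleave Y j = interleave Y j.+1.
Proof.
move=> [/andP[d1 d2] /andP[hs1 hs2] [alt1 alt2]] x1 x2.
set i := index x Y.1; set j := index x Y.2.
have hi : i < size Y.1 by rewrite index_mem.
have hj : j < size Y.2 by rewrite index_mem.
have ei : nth 0 Y.1 i = x by rewrite nth_index.
have ej : nth 0 Y.2 j = x by rewrite nth_index.
case: (ltngtP i j) => ij.
- by have := strdec_nth_lt d2 ij hj; have := alt1 i ltac:(lia); rewrite ei ej; lia.
- case: (ltngtP i j.+1) => ij'; first lia.
  + by have := strdec_nth_lt d1 ij' hi; have := alt2 j ltac:(lia); rewrite ei ej; lia.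
  + exists (j + j).+1; split; first lia.
    by rewrite double_succ interleave_even interleave_odd !ent_in // -ij' ?ei ?ej //; lia.
- exists (i + i); split; first lia.
  have hi' : i < size Y.2 by rewrite ij.
  by rewrite interleave_even interleave_odd (ent_in hi) (ent_in hi') ei ij ej.
Qed.

Lemma interleave_step2_symbol L : balanced L ->
  (forall q, q.+2 < size L.1 + size L.2 ->
     xlt (interleave L q.+2) (interleave L q)) ->
  is_symbol L.
Proof.
move=> /andP[hs1 hs2] H; apply/andP; split; apply/(sortedP 0) => i hi.
- have := H (i + i) ltac:(lia).
  by rewrite double_succ !interleave_even !ent_in ?xltF //; lia.
- have := H (i + i).+1 ltac:(lia).
  rewrite (_ : (i + i).+3 = (i.+1 + i.+1).+1); last lia.
  by rewrite !interleave_odd !ent_in ?xltF //; lia.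
Qed.

(* Moving an entry u of one row and an entry v of the other row of a regular
   symbol to the opposite rows amounts to applying the transposition (u v). *)
Definition transp (u v x : nat) : nat :=
  if x == u then v else if x == v then u else x.

Lemma transpK u v : involutive (transp u v).
Proof.
move=> x; rewrite /transp; case: (eqVneq x u) => [->|xu]; rewrite ?eqxx.
  by case: (eqVneq v u) => [->|vu] //; rewrite eqxx.
case: (eqVneq x v) => [->|xv]; rewrite ?eqxx //.
by rewrite (negbTE xu) (negbTE xv).
Qed.

Lemma transpC u v : transp u v =1 transp v u.
Proof.
move=> x; rewrite /transp; case: (eqVneq x u) => [->|xu].
  by case: (eqVneq u v) => [->|_]; rewrite ?eqxx.
by case: (eqVneq x v) => // _; rewrite (negbTE xu).
Qed.

Lemma strdec_uniq s : strdec s -> uniq s.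
Proof.
apply: sorted_uniq; last by move=> x; rewrite /= ltnn.
by move=> a b c h1 h2; apply: ltn_trans h2 h1.
Qed.

Lemma sort_strdec (s t : seq nat) : uniq s -> strdec t -> s =i t ->
  sort (fun x y => y <= x) s = t.
Proof.
move=> us dt st.
have tot : total (fun x y : nat => y <= x) by move=> a b; apply: leq_total.
have tr : transitive (fun x y : nat => y <= x).
  by move=> a b c h1 h2; apply: leq_trans h2 h1.
have an : antisymmetric (fun x y : nat => y <= x).
  by move=> a b /andP[h1 h2]; apply/eqP; rewrite eqn_leq h1 h2.
rewrite (perm_sortP tot tr an s t _); last exact: uniq_perm (strdec_uniq dt) st.
by apply: sorted_sort => //; apply: sub_sorted dt => a b; apply: ltnW.
Qed.

Lemma in_Sbar_self Y : is_symbol Y -> in_Sbar Y Y.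
Proof.
case: Y => s t /andP[/= ds dt]; exists [::]; split => //; rewrite /move /=.
have keep r : [seq x <- r | x \notin [::]] = r by elim: r => //= x r ->.
have drop r : [seq x <- r | x \in [::]] = [::] by elim: r.
have tr : transitive (fun x y : nat => y <= x).
  by move=> a b c h1 h2; apply: leq_trans h2 h1.
have geq_sorted r : strdec r -> sorted (fun x y => y <= x) r.
  by apply: sub_sorted => a b; apply: ltnW.
by rewrite !keep !drop !cats0 !sorted_sort // geq_sorted.
Qed.

Lemma move_row_transp (s t M : seq nat) u v :
  uniq s -> uniq t -> (forall x, x \in s -> x \in t -> False) ->
  u \in s -> v \in t -> M =i [:: u; v] -> strdec (map (transp u v) s) ->
  sort (fun x y => y <= x) ([seq x <- s | x \notin M] ++ [seq x <- t | x \in M])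
  = map (transp u v) s.
Proof.
move=> us ut disj us' vt EM ds'; apply: sort_strdec ds' _.
  rewrite cat_uniq !filter_uniq //= andbT; apply/hasPn => x; rewrite !mem_filter.
  by move=> /andP[_ xt]; apply/negP => /andP[_ xs]; apply: (disj x).
have ut' : u \notin t by apply/negP; apply: disj.
have vs : v \notin s by apply/negP => /disj; apply.
move=> x; rewrite -{2}(transpK u v x) (mem_map (can_inj (transpK u v))).
rewrite mem_cat !mem_filter !EM !inE /transp.
case: (eqVneq x u) => [->|xu]; first by rewrite (negbTE vs) (negbTE ut') orbF.
case: (eqVneq x v) => [->|xv]; first by rewrite us' vt orbT.
by rewrite /= orbF.
Qed.

Lemma move_transp Y u v : is_symbol Y -> regular Y -> u \in Y.1 -> v \in Y.2 ->
  is_symbol (map (transp u v) Y.1, map (transp u v) Y.2) ->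
  move Y [:: u; v] = (map (transp u v) Y.1, map (transp u v) Y.2).
Proof.
case: Y => s t /andP[ds dt] reg us vt /andP[ds' dt'] /=.
have disj x : x \in s -> x \in t -> False by move=> xs xt; apply: (reg x).
rewrite /move /=; congr pair.
  by apply: move_row_transp; rewrite ?strdec_uniq.
rewrite (eq_map (transpC u v)); apply: move_row_transp; rewrite ?strdec_uniq //.
- by move=> x xt xs; apply: (disj x).
- by move=> x; rewrite !inE orbC.
- by rewrite -(eq_map (transpC u v)).
Qed.

Lemma ent_map f s i :
  ent (map f s) i = if ent s i is Fin x then Fin (f x) else ent s i.
Proof.
rewrite /ent size_map; case: ifP => // /andP[h1 h2].
by rewrite (nth_map 0) //; case: i h1 h2.
Qed.

Lemma interleave_map f Y k :
  interleave (map f Y.1, map f Y.2) k =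
  if interleave Y k is Fin x then Fin (f x) else interleave Y k.
Proof. by rewrite /interleave; case: (odd k); rewrite ent_map. Qed.

Lemma swap_adjacent_move Y p : special Y -> regular Y ->
  p.+1 < size Y.1 + size Y.2 ->
  (forall q, q.+2 < size Y.1 + size Y.2 ->
     xlt (swap_adj (interleave Y) p q.+2) (swap_adj (interleave Y) p q)) ->
  exists L, [/\ in_Sbar Y L, size L.1 = size Y.1, size L.2 = size Y.2,
     interleave L =1 swap_adj (interleave Y) p & L <> Y].
Proof.
move=> [isY balY altY] reg pN step2.
have YD := interleave_decreasing balY altY reg.
have [u [Yu mu]] := interleave_fin balY (ltnW pN).
have [v [Yv mv]] := interleave_fin balY pN.
have uv : u != v by apply/eqP => E; have := YD p pN; rewrite Yu Yv E xlt_irr.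
set L := (map (transp u v) Y.1, map (transp u v) Y.2).
have EL : interleave L =1 swap_adj (interleave Y) p.
  move=> q; rewrite /L interleave_map /swap_adj; case: (eqVneq q p) => [->|qp].
    by rewrite Yu Yv /transp eqxx.
  case: (eqVneq q p.+1) => [->|qp1].
    by rewrite Yu Yv /transp eq_sym (negbTE uv) eqxx.
  case: (ltnP q (size Y.1 + size Y.2)) => qN; last by rewrite interleave_out.
  have [y [Yy _]] := interleave_fin balY qN; rewrite Yy /transp.
  have yu : y != u.
    by apply: contra_neq qp => yu; apply: (decreasing_inj YD qN (ltnW pN)); rewrite Yy Yu yu.
  have yv : y != v.
    by apply: contra_neq qp1 => yv; apply: (decreasing_inj YD qN pN); rewrite Yy Yv yv.
  by rewrite (negbTE yu) (negbTE yv).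
have balL : balanced L by rewrite /balanced /L /= !size_map.
have isL : is_symbol L.
  by apply: interleave_step2_symbol balL _ => q; rewrite /L /= !size_map !EL; apply: step2.
have inI_rows x : (x \in Y.1) || (x \in Y.2) -> inI Y x.
  rewrite /inI; case: (boolP (x \in Y.1)) => x1; case: (boolP (x \in Y.2)) => x2 //.
  by case: (reg x).
exists L; split; rewrite /L /= ?size_map //.
- move: mu mv; rewrite /=; case: (odd p) => /= mu mv.
  + exists [:: v; u]; split.
      by move=> x; rewrite !inE => /orP[] /eqP-> ; apply: inI_rows; rewrite ?mu ?mv ?orbT.
    by rewrite move_transp // -!(eq_map (transpC u v)).
  + exists [:: u; v]; split; last by rewrite move_transp.
    by move=> x; rewrite !inE => /orP[] /eqP-> ; apply: inI_rows; rewrite ?mu ?mv ?orbT.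
- move=> E; have := EL p; rewrite /L E /swap_adj eqxx => E'.
  by have := YD p pN; rewrite -E' xlt_irr.
Qed.

Lemma exchange_in_Sbar Y z N : special Y -> regular Y -> size Y.1 + size Y.2 = N ->
  interlaced z (interleave Y) N -> z N.-1 = NInf ->
  (exists j, j.+1 < N.-1 /\ z j = z j.+1) ->
  exists L, [/\ in_Sbar Y L, size L.1 = size Y.1, size L.2 = size Y.2, L <> Y &
     interlaced z (interleave L) N].
Proof.
move=> spY reg <- zY zN [j [jN zj]]; have [_ balY altY] := spY.
have YD := interleave_decreasing balY altY reg.
have [p [pN zYp]] := exchange_adjacent zY YD zN jN zj.
have [L [SL L1 L2 EL LY]] :=
  swap_adjacent_move spY reg pN (interlaced_step2 zYp).
exists L; split => //.
by case: zYp => zw wz; split => k kN; rewrite EL; [apply: zw | apply: wz].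
Qed.

(* Part (i), m' = m+1: a repeated entry of Z lets one exchange two adjacent
   entries of Z' and obtain a second element of D_Z. *)
Lemma regular_of_D_Z m Z Z' : special1 m Z -> special0 m.+1 Z' -> regular Z' ->
  (forall L', D_Z m m.+1 Z Z' L' <-> L' = Z') -> regular Z.
Proof.
move=> hZ hZ' reg uniqD x [x1 x2].
have [isZ Z1 Z2 _] := hZ; have [_ Z'1 Z'2 _] := hZ'.
have spZ := special1_special hZ; have [_ balZ _] := spZ.
have [j [jN zj]] := nonregular_repeat spZ x1 x2.
have [_ _] := (uniqD Z').2 erefl; rewrite (gtn_eqF (ltnSn m)) => BZZ'.
have zZ' := (Bplus_succ_interlaced Z1 Z2 Z'1 Z'2).1 BZZ'.
have zN : interleave Z (m.+1 + m.+1).-1 = NInf.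
  by apply: interleave_out balZ _; rewrite Z1 Z2; lia.
have jN' : j.+1 < (m.+1 + m.+1).-1 by rewrite Z1 Z2 in jN; lia.
have [L [SL L1 L2 LZ' zL]] := exchange_in_Sbar (special0_special hZ') reg
  (etrans (congr2 addn Z'1 Z'2) erefl) zZ' zN (ex_intro _ j (conj jN' zj)).
rewrite Z'1 Z'2 in L1 L2.
apply/LZ'/(uniqD L); split.
- by split; [apply: in_Sbar_self | rewrite (defect_size Z1 Z2); lia].
- by split => //; rewrite (defect_size L1 L2); lia.
- by rewrite (gtn_eqF (ltnSn m)); apply/(Bplus_succ_interlaced Z1 Z2 L1 L2).
Qed.

(* Part (ii), m' = m: symmetrically, a repeated entry of Z' lets one exchange
   two adjacent entries of Z and obtain a second element of D_{Z'}. *)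
Lemma regular_of_D_Z' m Z Z' : special1 m Z -> special0 m Z' -> regular Z ->
  (forall L, D_Z' m m Z Z' L <-> L = Z) -> regular Z'.
Proof.
move=> hZ hZ' reg uniqD x [x1 x2].
have [_ Z1 Z2 _] := hZ; have [isZ' Z'1 Z'2 _] := hZ'.
have spZ' := special0_special hZ'; have [_ balZ' _] := spZ'.
have [j [jN zj]] := nonregular_repeat spZ' x1 x2.
have [_ _] := (uniqD Z).2 erefl; rewrite eqxx => BZZ'.
have zZ := (Bplus_eq_interlaced Z1 Z2 Z'1 Z'2).1 BZZ'.
have zN : interleave Z' (m.+1 + m).-1 = NInf.
  by apply: interleave_out balZ' _; rewrite Z'1 Z'2; lia.
have jN' : j.+1 < (m.+1 + m).-1 by rewrite Z'1 Z'2 in jN; lia.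
have [L [SL L1 L2 LZ zL]] := exchange_in_Sbar (special1_special hZ) reg
  (etrans (congr2 addn Z1 Z2) erefl) zZ zN (ex_intro _ j (conj jN' zj)).
rewrite Z1 Z2 in L1 L2.
apply/LZ/(uniqD L); split.
- by split => //; rewrite (defect_size L1 L2); lia.
- by split; [apply: in_Sbar_self | rewrite (defect_size Z'1 Z'2); lia].
- by rewrite eqxx; apply/(Bplus_eq_interlaced L1 L2 Z'1 Z'2).
Qed.

Theorem lemma0804 (m m' : nat) (Z Z' : symbol) :
  special1 m Z -> special0 m' Z' -> (m' = m \/ m' = m.+1) ->
  (m' = m.+1 -> regular Z' ->
     (forall L' : symbol, D_Z m m' Z Z' L' <-> L' = Z') -> regular Z) /\
  (m' = m -> regular Z ->
     (forall L : symbol, D_Z' m m' Z Z' L <-> L = Z) -> regular Z').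
Proof.
move=> hZ hZ' _; split => Em; rewrite Em in hZ' *.
- exact: regular_of_D_Z.
- exact: regular_of_D_Z'.
Qed.
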